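(* Let $F$ be a Boolean formula over $n$ variables and $m\ge1$. If $|\mathrm{Sol}(F)|\ge 2^{m+3}$, then $\varphi^F_{holes}(m)$ is true.
   Context: $\mathrm{Sol}(F)\subseteq\{0,1\}^n$ is the set of satisfying assignments of $F$. $\mathcal{H}(n,m,2)$ is a fixed explicit pairwise independent family of hash functions $\{0,1\}^n\to\{0,1\}^m$: for $h$ uniform in the family, distinct $y_1,y_2$ and any $\alpha_1,\alpha_2\in\{0,1\}^m$, $\Pr[h(y_1)=\alpha_1\wedge h(y_2)=\alpha_2]=2^{-2m}$. The formula $\varphi^F_{holes}(m)$ is $\exists h_1,\dots,h_{m+1}\in\mathcal{H}(n,m,2)\ \forall\alpha\in\{0,1\}^m\ \exists z\in\{0,1\}^n:\ \bigvee_{i=1}^{m+1}(F(z)\wedge h_i(z)=\alpha)$, i.e. every $\alpha\in\{0,1\}^m$ is the image of some solution of $F$ under some $h_i$. *)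

From mathcomp Require Import all_boot.
Set Implicit Arguments. Unset Strict Implicit. Unset Printing Implicit Defensive.

Definition bvec (n : nat) := {ffun 'I_n -> bool}.

(* Sol(F) for a Boolean formula F over n variables, given by its semantics. *)
Definition Sol (n : nat) (F : pred (bvec n)) : {set bvec n} := [set x | F x].

(* A hash family H(n,m,2): index type I (h uniform over I), each index
   giving a function {0,1}^n -> {0,1}^m.  Pairwise independence:
   for distinct y1,y2 and any a1,a2,
   Pr_i[h_i y1 = a1 /\ h_i y2 = a2] = 2^(-2m), i.e.
   #{i | ...} * 2^(2m) = #I  (and the family is nonempty). *)
Definition pairwise_indep (n m : nat) (I : finType) (H : I -> bvec n -> bvec m) :=
  0 < #|I| /\
  forall (y1 y2 : bvec n) (a1 a2 : bvec m), y1 != y2 ->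
    #|[set i : I | (H i y1 == a1) && (H i y2 == a2)]| * 2 ^ (2 * m) = #|I|.

Definition phi_holes (n m : nat) (F : pred (bvec n)) (I : finType)
    (H : I -> bvec n -> bvec m) : Prop :=
  exists hs : 'I_m.+1 -> I,
    forall alpha : bvec m, exists z : bvec n,
      exists i : 'I_m.+1, F z && (H (hs i) z == alpha).

From mathcomp Require Import all_boot zify.

Set Implicit Arguments.
Unset Strict Implicit.
Unset Printing Implicit Defensive.

(* Second-moment method plus a union bound.  For a fixed [alpha], let [X h]
   count the solutions that [h] sends to [alpha].  Pairwise independence gives
   E[X] = s / 2^m and E[X^2] <= s / 2^m + (s / 2^m)^2 for s = |Sol(F)|, so by
   Chebyshev Pr[X = 0] <= 2^m / s <= 1/8.  Hence for m+1 independent hashes,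
   a fixed [alpha] is missed by all of them with probability at most
   8^-(m+1), and the union bound over the 2^m values of [alpha] leaves
   2^m / 8^(m+1) < 1. *)

Lemma sum_nat_of_bool_card (T : finType) (P : pred T) :
  \sum_(i : T) (P i : nat) = #|[set i | P i]|.
Proof.
rewrite -sum1dep_card [RHS]big_mkcond /=; apply: eq_bigr => i _.
by case: (P i).
Qed.

Lemma card_bvec (m : nat) : #|bvec m| = 2 ^ m.
Proof. by rewrite card_ffun card_bool card_ord. Qed.

Definition pairwise_uniform (T U I : finType) (H : I -> T -> U) :=
  forall (y1 y2 : T) (a1 a2 : U), y1 != y2 ->
    #|[set i | (H i y1 == a1) && (H i y2 == a2)]| * #|U| ^ 2 = #|I|.

Lemma pairwise_indep_uniform (n m : nat) (I : finType)
    (H : I -> bvec n -> bvec m) :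
  pairwise_indep H -> pairwise_uniform H.
Proof. by move=> [_ indepH] y1 y2 a1 a2 /indepH; rewrite card_bvec -expnM mulnC. Qed.

Section SecondMoment.

Variables (T U I : finType) (H : I -> T -> U).
Hypotheses (H_uniform : pairwise_uniform H) (T_gt1 : 1 < #|T|).

Lemma card_hash_eq (y : T) (a : U) :
  #|[set i | H i y == a]| * #|U| = #|I|.
Proof.
have [y' y'_neq] : exists y', y != y'.
  have /card_gt1P [x [z [_ _ x_neq_z]]] := T_gt1.
  by case: (eqVneq y x) => [->|]; [exists z | exists x].
have <- : \sum_(a' : U) #|[set i | (H i y == a) && (H i y' == a')]| =
          #|[set i | H i y == a]|.
  under eq_bigr do rewrite -sum_nat_of_bool_card.
  rewrite exchange_big -sum_nat_of_bool_card; apply: eq_bigr => i _ /=.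
  rewrite (bigD1 (H i y')) //= eqxx andbT big1 ?addn0 // => a' a'_neq.
  by rewrite eq_sym in a'_neq; rewrite (negbTE a'_neq) andbF.
have U_gt0 : 0 < #|U| by apply/card_gt0P; exists a.
apply/eqP; rewrite -(eqn_pmul2r U_gt0) -mulnA mulnn big_distrl /=.
by rewrite (eq_bigr _ (fun a' _ => H_uniform a a' y'_neq)) sum_nat_const mulnC.
Qed.

Variables (S : {set T}) (a : U).

Definition hits (i : I) := \sum_(y in S) (H i y == a : nat).

Lemma sum_hits : (\sum_i hits i) * #|U| = #|S| * #|I|.
Proof.
rewrite exchange_big /= big_distrl /= -sum_nat_const; apply: eq_bigr => y _.
by rewrite sum_nat_of_bool_card card_hash_eq.
Qed.

Lemma sum_hits_sqr :
  (\sum_i hits i ^ 2) * #|U| ^ 2 <= #|S| * (#|I| * #|U| + #|S| * #|I|).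
Proof.
have hits_sqrE i : hits i ^ 2 =
    \sum_(y in S) \sum_(y' in S) ((H i y == a) && (H i y' == a) : nat).
  rewrite /hits -mulnn big_distrl /=; apply: eq_bigr => y _.
  by rewrite big_distrr /=; apply: eq_bigr => y' _; rewrite mulnb.
under eq_bigr do rewrite hits_sqrE.
rewrite exchange_big; under eq_bigr do rewrite exchange_big.
rewrite big_distrl -sum_nat_const; apply: leq_sum => y yS /=.
rewrite big_distrl (bigD1 y) //= sum_nat_of_bool_card.
under eq_finset do rewrite andbb.
rewrite expnS expn1 mulnA card_hash_eq leq_add //.
rewrite -[#|S| * #|I|]sum_nat_const big_mkcondr /=; apply: leq_sum => y' _.
case: ifP => // y'_neq; rewrite sum_nat_of_bool_card H_uniform //.
by rewrite eq_sym y'_neq.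
Qed.

Lemma card_no_hits :
  #|[set i | [forall y in S, H i y != a]]| * #|S| <= #|I| * #|U|.
Proof.
set s := #|S|; set M := #|U|.
have missE i : [forall y in S, H i y != a] = (hits i == 0).
  by rewrite sum_nat_eq0; apply: eq_forallb => y; rewrite eqb0.
(* Chebyshev for one [i]: (x - s)^2 >= [x == 0] s^2 with x = hits i * M,
   written without subtraction. *)
have pointwise i : [forall y in S, H i y != a] * s ^ 2 + 2 * s * (hits i * M)
                   <= (hits i * M) ^ 2 + s ^ 2.
  rewrite missE; case: eqP => [-> | _] /=.
    by rewrite mul0n muln0 addn0 mul1n leq_addl.
  by rewrite mul0n add0n -mulnA [s * _]mulnC; apply: nat_Cauchy.
have := leq_sum (index_enum I) (fun i (_ : true) => pointwise i).
rewrite !big_split /= -big_distrl sum_nat_of_bool_card -big_distrr -big_distrl /=.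
rewrite sum_hits sum_nat_const; under eq_bigr do rewrite expnMn.
rewrite -big_distrl /= -/s (_ : #|xpredT| = #|I|) // => sum_bound.
have := sum_hits_sqr; rewrite -/s -/M.
case: (posnP s) => [-> | s_gt0]; first by rewrite muln0.
by nia.
Qed.

End SecondMoment.

Lemma exists_ffun_avoiding (A I : finType) (k : nat) (B : A -> {set I}) :
  \sum_a #|B a| ^ k < #|I| ^ k ->
  exists f : {ffun 'I_k -> I}, forall a, exists j, f j \notin B a.
Proof.
move=> small_sum.
suff /existsP [f /forallP f_avoids] :
    [exists f : {ffun 'I_k -> I}, [forall a, [exists j, f j \notin B a]]].
  by exists f => a; apply/existsP.
move: small_sum; apply: contraLR; rewrite -leqNgt negb_exists => /forallP f_in.
have -> : #|I| ^ k = \sum_(f : {ffun 'I_k -> I}) 1.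
  by rewrite sum1_card card_ffun card_ord.
have -> : \sum_a #|B a| ^ k = \sum_a \sum_(f : {ffun 'I_k -> I}) (f \in ffun_on (B a) : nat).
  by apply: eq_bigr => a _; rewrite sum_nat_of_bool_card cardsE card_ffun_on card_ord.
rewrite exchange_big /=; apply: leq_sum => f _.
have /forallPn [a] := f_in f; rewrite negb_exists => /forallP f_inB.
rewrite (bigD1 a) //=; suff -> : f \in ffun_on (B a) by [].
by apply/ffun_onP => j; have := f_inB j; rewrite negbK.
Qed.

Lemma exists_ffun_avoiding_small (A I : finType) (k c : nat) (B : A -> {set I}) :
  0 < #|I| -> #|A| < c ^ k -> (forall a, c * #|B a| <= #|I|) ->
  exists f : {ffun 'I_k -> I}, forall a, exists j, f j \notin B a.
Proof.
move=> I_gt0 A_small B_small; apply: exists_ffun_avoiding.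
have ck_gt0 : 0 < c ^ k := leq_ltn_trans (leq0n _) A_small.
rewrite -(ltn_pmul2r ck_gt0).
apply: (@leq_ltn_trans (#|A| * #|I| ^ k)).
  rewrite big_distrl -sum_nat_const leq_sum // => a _ /=.
  rewrite -expnMn; have [-> // | k_gt0] := posnP k.
  by rewrite leq_exp2r // mulnC.
by rewrite mulnC ltn_pmul2l ?expn_gt0 ?I_gt0.
Qed.

Theorem lemma5p2 (n m : nat) (F : pred (bvec n)) (I : finType)
    (H : I -> bvec n -> bvec m) :
  pairwise_indep H -> 1 <= m -> 2 ^ (m + 3) <= #|Sol F| ->
  phi_holes F H.
Proof.
move=> indepH _; rewrite expnD => Sol_big; have [I_gt0 _] := indepH.
have uniformH := pairwise_indep_uniform indepH.
have pow_gt0 : 0 < 2 ^ m by rewrite expn_gt0.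
have bvec_gt1 : 1 < #|bvec n| by apply: leq_trans (max_card (Sol F)); lia.
have few_misses (alpha : bvec m) :
    8 * #|[set i | [forall y in Sol F, H i y != alpha]]| <= #|I|.
  have := card_no_hits uniformH bvec_gt1 (Sol F) alpha; rewrite card_bvec.
  move=> /(leq_trans (leq_mul (leqnn _) Sol_big)).
  by rewrite mulnCA [_ * 2 ^ m]mulnC leq_pmul2l // mulnC.
have [|hs hs_hit] := exists_ffun_avoiding_small (k := m.+1) I_gt0 _ few_misses.
  by rewrite card_bvec -[8]/(2 ^ 3) -expnM ltn_exp2l //; lia.
exists hs => alpha; have [j] := hs_hit alpha.
rewrite inE => /forall_inPn [y y_sol y_hit].
by exists y, j; rewrite inE in y_sol; rewrite y_sol (negbNE y_hit).
Qed.
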